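(* Let $A=(A_1,\dots,A_d)$ take values in $\{0,1\}^d$ with probabilities $p(a)>0$ for all $a$. For $b\in\{0,1\}^d$ define the linear interactions $\xi_b=\sum_{a\in\{0,1\}^d}(-1)^{a\cdot b}p(a)$ and the log-linear interactions $\lambda_b=2^{-d}\sum_{a\in\{0,1\}^d}(-1)^{a\cdot b}\log p(a)$, where $a\cdot b=\sum_v a_vb_v$. Then the following are equivalent: (1) $p$ is palindromic, i.e. $p(a)=p(\sim a)$ for all $a$; (2) $\xi_b=0$ for all $b$ with $|b|$ odd; (3) $\lambda_b=0$ for all $b$ with $|b|$ odd.
   Context: $\sim a$ denotes the complement of the binary vector $a$ ($(\sim a)_v=1-a_v$). For $b\in\{0,1\}^d$, $|b|=\sum_v b_v$ is its order; a vector $b$ is identified with the subset $\{v: b_v=1\}$ of $\{1,\dots,d\}$, and the interaction indexed by $b$ is called of odd or even order according to the parity of $|b|$. *)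

From mathcomp Require Import all_boot all_order all_algebra.
From mathcomp Require Import reals exp.
Set Implicit Arguments. Unset Strict Implicit. Unset Printing Implicit Defensive.
Import Order.TTheory GRing.Theory Num.Theory.
Local Open Scope ring_scope.

(* Binary vectors in {0,1}^d, coordinates indexed by 'I_d (v = 1..d shifted). *)
Definition bvec (d : nat) := {ffun 'I_d -> bool}.

Definition bcompl d (a : bvec d) : bvec d := [ffun v => ~~ a v].

Definition bdot d (a b : bvec d) : nat := \sum_(v < d) (a v && b v).

Definition border d (b : bvec d) : nat := \sum_(v < d) (b v : nat).

Definition xi (R : realType) d (p : bvec d -> R) (b : bvec d) : R :=
  \sum_(a : bvec d) (-1) ^+ (bdot a b) * p a.

Definition lambda (R : realType) d (p : bvec d -> R) (b : bvec d) : R :=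
  (2 ^+ d)^-1 * \sum_(a : bvec d) (-1) ^+ (bdot a b) * ln (p a).

Definition palindromic (R : realType) d (p : bvec d -> R) : Prop :=
  forall a : bvec d, p a = p (bcompl a).

From mathcomp Require Import all_boot all_order all_algebra.
From mathcomp Require Import reals exp.
Import Order.TTheory GRing.Theory Num.Theory.
Local Open Scope ring_scope.

(* Both kinds of interactions are Walsh-Hadamard transforms, of p and of
   ln p. Complementing the argument of f multiplies its transform at b by
   (-1)^|b|, so f is palindromic iff its odd-order coefficients vanish: one
   direction is immediate, the other is the injectivity of the transform
   (orthogonality of the characters). Since ln is injective on positive
   reals, p and ln p are palindromic together. *)

Section WalshTransform.
Variables (R : numDomainType) (d : nat).

Lemma bcomplK : involutive (@bcompl d).
Proof. by move=> a; apply/ffunP=> v; rewrite !ffunE negbK. Qed.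

Lemma bdot_bcompl (a b : bvec d) : (bdot (bcompl a) b + bdot a b)%N = border b.
Proof.
rewrite /bdot /border -big_split; apply: eq_bigr => v _.
by rewrite ffunE; case: (a v); case: (b v).
Qed.

Lemma sign_bdot_bcompl (a b : bvec d) :
  (-1) ^+ bdot (bcompl a) b = (-1) ^+ border b * (-1) ^+ bdot a b :> R.
Proof.
rewrite -(bdot_bcompl a b) exprD -mulrA -exprD addnn.
by rewrite -(signr_odd _ _.*2) odd_double mulr1.
Qed.

Definition walsh (f : bvec d -> R) (b : bvec d) : R :=
  \sum_(a : bvec d) (-1) ^+ bdot a b * f a.

Lemma walsh_bcompl (f : bvec d -> R) (b : bvec d) :
  walsh (f \o @bcompl d) b = (-1) ^+ border b * walsh f b.
Proof.
rewrite /walsh (reindex_inj (inv_inj bcomplK)) mulr_sumr.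
by apply: eq_bigr => a _; rewrite /= bcomplK sign_bdot_bcompl mulrA.
Qed.

Lemma sum_sign_bdot (a c : bvec d) :
  \sum_(b : bvec d) (-1) ^+ bdot a b * (-1) ^+ bdot c b =
  (a == c)%:R * 2 ^+ d :> R.
Proof.
under eq_bigr => b _ do rewrite -exprD /bdot -big_split /= expr_sum.
rewrite -(bigA_distr_bigA (fun v x => (-1) ^+ ((a v && x) + (c v && x)) : R)).
have sum_coord v : \sum_(x : bool) (-1) ^+ ((a v && x) + (c v && x)) =
                   (a v == c v)%:R * 2 :> R.
  by rewrite big_bool; case: (a v); case: (c v);
     rewrite /= ?addn1 ?expr0 ?expr1 ?expr2 ?mulN1r ?opprK ?mul1r ?mul0r ?addNr.
rewrite (eq_bigr _ (fun v _ => sum_coord v)).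
have [<-|neq_ac] := eqVneq a c.
  rewrite mul1r -[d in 2 ^+ d]card_ord -prodr_const.
  by apply: eq_bigr => v _; rewrite eqxx mul1r.
have [v neq_v] : exists v, a v != c v.
  apply/existsP; apply: contraR neq_ac; rewrite negb_exists => /forallP eq_ac.
  by apply/eqP/ffunP => v; apply/eqP; rewrite -[_ == _]negbK eq_ac.
by rewrite mul0r (bigD1 v) //= (negbTE neq_v) !mul0r.
Qed.

Lemma walsh_inversion (f : bvec d -> R) (a : bvec d) :
  \sum_(b : bvec d) (-1) ^+ bdot a b * walsh f b = 2 ^+ d * f a.
Proof.
under eq_bigr => b _ do rewrite /walsh mulr_sumr.
rewrite exchange_big /=.
under eq_bigr => c _ do under eq_bigr => b _ do rewrite mulrA.
under eq_bigr => c _ do rewrite -mulr_suml sum_sign_bdot.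
rewrite (bigD1 a) //= eqxx mul1r big1 ?addr0 // => c neq_ca.
by rewrite eq_sym (negbTE neq_ca) !mul0r.
Qed.

Lemma walsh_inj (f g : bvec d -> R) : walsh f =1 walsh g -> f =1 g.
Proof.
move=> eq_fg a; have two_exp_neq0 : 2 ^+ d != 0 :> R by rewrite expf_neq0 ?pnatr_eq0.
apply: (mulfI two_exp_neq0).
by rewrite -!walsh_inversion; apply: eq_bigr => b _; rewrite eq_fg.
Qed.

Lemma walsh_palindromic (f : bvec d -> R) :
  (forall a, f a = f (bcompl a)) <->
  (forall b, odd (border b) -> walsh f b = 0).
Proof.
have walshE b : walsh (f \o @bcompl d) b = (-1) ^+ odd (border b) * walsh f b.
  by rewrite signr_odd walsh_bcompl.
split=> [pal_f b odd_b | odd_walsh_f a].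
  have : walsh (f \o @bcompl d) b = walsh f b.
    by apply: eq_bigr => a _; rewrite /= -pal_f.
  rewrite walshE odd_b expr1 mulN1r => /eqP.
  by rewrite eq_sym -addr_eq0 -mulr2n mulrn_eq0 => /orP [//|/eqP].
apply: (@walsh_inj f (f \o @bcompl d)) => b; rewrite walshE.
by case: (boolP (odd _)) => [odd_b|_]; rewrite ?(odd_walsh_f b odd_b) ?mulr0 ?mul1r.
Qed.

End WalshTransform.

Arguments walsh {R d}.

Theorem proposition2p2 (R : realType) (d : nat) (p : bvec d -> R)
  (p_pos : forall a, 0 < p a) (p_sum : \sum_(a : bvec d) p a = 1) :
  [/\ (palindromic p <-> (forall b : bvec d, odd (border b) -> xi p b = 0)),
      (palindromic p <-> (forall b : bvec d, odd (border b) -> lambda p b = 0)) &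
      ((forall b : bvec d, odd (border b) -> xi p b = 0) <->
       (forall b : bvec d, odd (border b) -> lambda p b = 0))].
Proof.
have pal_xi := walsh_palindromic R d p.
have pal_ln : palindromic p <-> (forall a, ln (p a) = ln (p (bcompl a))).
  split=> [pal_p a | pal_ln_p a]; first by rewrite pal_p.
  by apply: ln_inj; rewrite ?posrE ?p_pos.
have lambda_walsh : (forall b, odd (border b) -> lambda p b = 0) <->
                    (forall b, odd (border b) -> walsh (fun a => ln (p a)) b = 0).
  have inv2X_neq0 : (2 ^+ d)^-1 != 0 :> R by rewrite invr_eq0 expf_neq0 ?pnatr_eq0.
  split=> odd_eq0 b /odd_eq0; rewrite /lambda -/(walsh _ b); last by move->; rewrite mulr0.
  by move/eqP; rewrite mulf_eq0 (negbTE inv2X_neq0) => /eqP.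
have pal_lambda : palindromic p <-> (forall b, odd (border b) -> lambda p b = 0).
  by rewrite lambda_walsh -(walsh_palindromic R d (fun a => ln (p a))) pal_ln.
by split; [exact: pal_xi | exact: pal_lambda | rewrite -pal_xi -pal_lambda].
Qed.
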